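(* Let $F$ be a field of characteristic zero and let $n\ge 2$. Let $C_n$ be the oriented cycle quiver with $n$ vertices and $FC_n$ its path algebra over $F$. Then $\mathrm{Id}(FC_n)=\mathrm{Id}(M_n(F))$.
   Context: The oriented cycle $C_n$ has vertices $1,\dots,n$ and arrows $i\to i+1$ for $1\le i<n$ and $n\to 1$. The path algebra $FC_n$ is the $F$-vector space with basis all paths of $C_n$ (including length-zero paths at each vertex), with product of paths $p,q$ equal to the concatenation $pq$ if the terminal vertex of $p$ equals the starting vertex of $q$, and $0$ otherwise. $M_n(F)$ is the algebra of $n\times n$ matrices over $F$. For an $F$-algebra $A$, $\mathrm{Id}(A)$ denotes the T-ideal of the free associative algebra $F\langle X\rangle$ consisting of all polynomial identities satisfied by $A$. *)

From mathcomp Require Import all_boot all_order all_algebra.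
Set Implicit Arguments. Unset Strict Implicit. Unset Printing Implicit Defensive.
Import GRing.Theory.
Local Open Scope ring_scope.

(* Elements of the free associative (unital) algebra F<X>, X = {x_0, x_1, ...}:
   finite F-linear combinations of words in the variables; a word is a
   sequence of variable indices (the empty word is the unit 1). *)
Definition ncpoly (F : Type) := seq (F * seq nat).

Section PathAlgebra.
Variables (F : fieldType) (n : nat).

(* Vertices of C_n are 'I_n (vertex i+1 of the paper is i here); the arrows
   are i -> i+1 (mod n).  A path of C_n is determined by its starting vertex
   and its length (from each vertex there is exactly one path of each length);
   (s, 0) is the trivial path e_s at s. *)
Definition cpath := ('I_n * nat)%type.
Definition cpath_target (p : cpath) : nat := ((p.1 : nat) + p.2) %% n.

Definition pathalg := seq (F * cpath).

Definition pa_coef (a : pathalg) (p : cpath) : F := \sum_(x <- a | x.2 == p) x.1.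
Definition pa_is0 (a : pathalg) : Prop := forall p : cpath, pa_coef a p = 0.

Definition pa_scale (c : F) (a : pathalg) : pathalg := [seq (c * x.1, x.2) | x <- a].
Definition pa_mul (a b : pathalg) : pathalg :=
  [seq (x.1 * y.1, (x.2.1, (x.2.2 + y.2.2)%N)) : F * cpath
   | x <- a, y <- [seq y <- b | cpath_target x.2 == nat_of_ord y.2.1]].
Definition pa_one : pathalg := [seq (1, (i, 0%N)) | i <- enum 'I_n].

Definition pa_eval (v : nat -> pathalg) (f : ncpoly F) : pathalg :=
  flatten [seq pa_scale m.1 (foldr (fun j acc => pa_mul (v j) acc) pa_one m.2) | m <- f].

Definition Id_pathalg (f : ncpoly F) : Prop :=
  forall v : nat -> pathalg, pa_is0 (pa_eval v f).

Definition mx_eval (v : nat -> 'M[F]_n) (f : ncpoly F) : 'M[F]_n :=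
  \sum_(m <- f) m.1 *: foldr (fun j acc => v j *m acc) 1%:M m.2.

Definition Id_mx (f : ncpoly F) : Prop :=
  forall v : nat -> 'M[F]_n, mx_eval v f = 0.

End PathAlgebra.

From mathcomp Require Import all_boot all_order all_algebra.
Set Implicit Arguments. Unset Strict Implicit. Unset Printing Implicit Defensive.
Import GRing.Theory.
Local Open Scope ring_scope.

(* For t in F, sending the path of length k from s to t^k E_(s, s+k mod n)
   defines an algebra map FC_n -> M_n(F).  At t = 1 it is onto, so every
   identity of FC_n holds in M_n(F).  Conversely, the (i, j) entry of the image
   of a is the value at t of the polynomial whose coefficient of X^l is the
   coefficient in a of the path of length l from i when that path ends at j
   (and 0 otherwise).  As F is infinite, a <> 0 thus has a nonzero image for
   some t, so every identity of M_n(F) holds in FC_n. *)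

Lemma pchar0_natr_inj (R : idomainType) :
  [pchar R] =i pred0 -> injective (fun k : nat => k%:R : R).
Proof.
move=> /pcharf0P R0 a b /eqP; wlog le_ab : a b / (a <= b)%N => [W|].
  by case/orP: (leq_total a b) => /W // eq_ba; rewrite eq_sym => /eq_ba.
rewrite -(subnKC le_ab) natrD -{1}[a%:R]addr0 (inj_eq (addrI _)) eq_sym R0.
by move=> /eqP ->; rewrite addn0.
Qed.

Lemma pchar0_poly_eq0 (R : idomainType) (p : {poly R}) :
  [pchar R] =i pred0 -> (forall t, p.[t] = 0) -> p = 0.
Proof.
move=> R0 p0.
apply: (@roots_geq_poly_eq0 _ _ [seq k%:R | k <- iota 0 (size p)]).
- by apply/allP => _ /mapP[k _ ->]; rewrite /root p0.
- by rewrite map_inj_uniq ?iota_uniq //; apply: pchar0_natr_inj.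
- by rewrite size_map size_iota.
Qed.

Section PathAlgebraRepresentation.
Variables (F : fieldType) (m : nat).
Local Notation n := m.+1.

Definition cpath_tgt (p : cpath n) : 'I_n := inord (cpath_target p).

Lemma cpath_tgtE p : cpath_tgt p = cpath_target p :> nat.
Proof. by rewrite inordK // ltn_pmod. Qed.

Definition pa_term_mx (t : F) (x : F * cpath n) : 'M[F]_n :=
  (x.1 * t ^+ x.2.2) *: delta_mx x.2.1 (cpath_tgt x.2).

Definition pa_mx (t : F) (a : pathalg F n) : 'M[F]_n :=
  \sum_(x <- a) pa_term_mx t x.

Lemma pa_mx_cat t a b : pa_mx t (a ++ b) = pa_mx t a + pa_mx t b.
Proof. exact: big_cat. Qed.

Lemma pa_mx_flatten t s : pa_mx t (flatten s) = \sum_(a <- s) pa_mx t a.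
Proof.
elim: s => [|a s IHs]; first by rewrite big_nil /pa_mx big_nil.
by rewrite pa_mx_cat IHs big_cons.
Qed.

Lemma pa_mx_scale t c a : pa_mx t (pa_scale c a) = c *: pa_mx t a.
Proof.
rewrite /pa_mx big_map scaler_sumr; apply: eq_bigr => x _.
by rewrite /pa_term_mx scalerA mulrA.
Qed.

Lemma pa_term_mxM t x y : pa_term_mx t x *m pa_term_mx t y =
  if cpath_target x.2 == y.2.1 then
    pa_term_mx t (x.1 * y.1, (x.2.1, (x.2.2 + y.2.2)%N)) else 0.
Proof.
rewrite /pa_term_mx -scalemxAl -scalemxAr scalerA mul_delta_mx_cond.
rewrite -(inj_eq val_inj) /= cpath_tgtE.
have [tgt_x|_] := eqP; last by rewrite mulr0n scaler0.
rewrite mulr1n exprD mulrACA; congr (_ *: delta_mx _ _).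
apply: val_inj; rewrite /= !cpath_tgtE /cpath_target /= -tgt_x.
by rewrite modnDml addnA.
Qed.

Lemma pa_mxM t a b : pa_mx t (pa_mul a b) = pa_mx t a *m pa_mx t b.
Proof.
elim: a => [|x a IHa]; first by rewrite /pa_mx !big_nil mul0mx.
rewrite /pa_mul allpairs_cons pa_mx_cat IHa /pa_mx big_cons mulmxDl.
congr (_ + _); rewrite big_map big_filter mulmx_sumr big_mkcond /=.
by apply: eq_bigr => y _; rewrite pa_term_mxM.
Qed.

Lemma pa_mx1 t : pa_mx t (pa_one F n) = 1%:M.
Proof.
apply/matrixP => i j; rewrite /pa_mx big_map big_enum summxE (bigD1 i) //=.
rewrite big1 => [|k /negbTE neq_ki]; last by rewrite !mxE eq_sym neq_ki mulr0.
rewrite /pa_term_mx /=; have -> : cpath_tgt (i, 0%N) = i.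
  by apply: val_inj; rewrite /= cpath_tgtE /cpath_target addn0 modn_small.
by rewrite addr0 !mxE eqxx expr0 !mul1r eq_sym.
Qed.

Lemma pa_mx_eval t (v : nat -> pathalg F n) (u : nat -> 'M[F]_n) f :
  (forall j, pa_mx t (v j) = u j) -> pa_mx t (pa_eval v f) = mx_eval u f.
Proof.
move=> vu; rewrite /pa_eval pa_mx_flatten big_map; apply: eq_bigr => x _.
rewrite pa_mx_scale; congr (_ *: _).
by elim: x.2 => [|j w IHw] /=; rewrite ?pa_mx1 // pa_mxM IHw vu.
Qed.

Definition pa_entry_poly (a : pathalg F n) (i j : 'I_n) : {poly F} :=
  \sum_(x <- a | (x.2.1 == i) && (cpath_tgt x.2 == j)) x.1 *: 'X^(x.2.2).

Lemma pa_mxE t a i j : pa_mx t a i j = (pa_entry_poly a i j).[t].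
Proof.
rewrite summxE horner_sum [RHS]big_mkcond; apply: eq_bigr => x _.
rewrite !mxE (eq_sym i) (eq_sym j).
by case: ifP => _; rewrite ?mulr0 // mulr1 hornerZ hornerXn.
Qed.

Lemma coef_pa_entry_poly a i j l :
  (pa_entry_poly a i j)`_l =
  if cpath_tgt (i, l) == j then pa_coef a (i, l) else 0.
Proof.
rewrite coef_sum /pa_coef; case: ifP => [/eqP <-|tgt_ij].
  rewrite [RHS]big_mkcond [LHS]big_mkcond; apply: eq_bigr => -[c [s k]] _ /=.
  rewrite coefZ coefXn xpair_eqE (eq_sym l).
  have [-> | _ //] := eqVneq s i; have [-> | _] := eqVneq k l.
    by rewrite !eqxx mulr1.
  by rewrite mulr0 if_same.
rewrite big1 // => -[c [s k]] /= /andP[/eqP-> /eqP tgt_sk].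
rewrite coefZ coefXn; case: eqP => [lk | _]; last by rewrite mulr0.
by move: tgt_ij; rewrite -tgt_sk lk eqxx.
Qed.

Lemma pa_mx_is0 t a : pa_is0 a -> pa_mx t a = 0.
Proof.
move=> a0; apply/matrixP => i j; rewrite pa_mxE mxE.
suff -> : pa_entry_poly a i j = 0 by rewrite horner0.
by apply/polyP => l; rewrite coef_pa_entry_poly a0 coef0 if_same.
Qed.

Lemma pa_is0_pa_mx a :
  [pchar F] =i pred0 -> (forall t, pa_mx t a = 0) -> pa_is0 a.
Proof.
move=> F0 a0 [i l].
suff /polyP/(_ l) : pa_entry_poly a i (cpath_tgt (i, l)) = 0.
  by rewrite coef_pa_entry_poly eqxx coef0.
by apply: pchar0_poly_eq0 => // t; rewrite -pa_mxE a0 mxE.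
Qed.

(* Any path from i of length = k - i (mod n) would do; adding n - i avoids
   truncated subtraction. *)
Definition mx_pa (w : 'M[F]_n) : pathalg F n :=
  [seq (w i k, (i, (k + (n - i))%N)) | i <- enum 'I_n, k <- enum 'I_n].

Lemma pa_mx_mx_pa w : pa_mx 1 (mx_pa w) = w.
Proof.
rewrite [RHS]matrix_sum_delta pa_mx_flatten big_map big_enum.
apply: eq_bigr => i _; rewrite /pa_mx big_map big_enum; apply: eq_bigr => k _.
rewrite /pa_term_mx /= expr1n mulr1; congr (_ *: delta_mx _ _).
apply: val_inj; rewrite /= cpath_tgtE /cpath_target /= addnCA.
by rewrite subnKC ?modnDr ?modn_small // ltnW.
Qed.

Lemma Id_pathalg_Id_mx (f : ncpoly F) : Id_pathalg n f -> Id_mx n f.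
Proof.
move=> fId w; rewrite -(@pa_mx_eval 1 (mx_pa \o w)) => [|j].
  exact: pa_mx_is0 (fId _).
exact: pa_mx_mx_pa.
Qed.

Lemma Id_mx_Id_pathalg (f : ncpoly F) :
  [pchar F] =i pred0 -> Id_mx n f -> Id_pathalg n f.
Proof.
move=> F0 fId v; apply: pa_is0_pa_mx => // t.
by rewrite (@pa_mx_eval t v (fun j => pa_mx t (v j))).
Qed.

End PathAlgebraRepresentation.

Theorem corollary3 (F : fieldType) (n : nat) :
  [pchar F] =i pred0 -> (2 <= n)%N ->
  forall f : ncpoly F, Id_pathalg n f <-> Id_mx n f.
Proof.
case: n => [//|m] F0 _ f; split.
  exact: Id_pathalg_Id_mx.
exact: Id_mx_Id_pathalg.
Qed.
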